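(* Let $k, r, a, b, m, n$ be integers satisfying $$k\geq 1,\quad 0\leq a\leq m,\quad \max\{0,\tfrac{a}{k}-r\}< b\leq n,\quad n> \tfrac{m}{k}-r.$$ Let $\mathcal{L}_{\frac1k,r}(a,b;m,n)$ be the set of lattice paths from $(a,b)$ to $(m,n)$ with unit steps $(1,0)$ and $(0,1)$ that stay strictly above the line $y=\frac{x}{k}-r$. Then $$|\mathcal{L}_{\frac1k,r}(a,b;m,n)|=\sum_{i=0}^{\lfloor\frac{k(n+r)-m-1}{k+1}\rfloor}(-1)^i\,\frac{k(b+r)-a}{(k+1)(n-i)-a-b+kr}\binom{(k+1)(n-i)-a-b+kr}{n-b-i}\binom{k(n+r-i)-m-1}{i}.$$
   Context: A path stays strictly above the line $y=\frac{x}{k}-r$ if every lattice point $(x,y)$ on it satisfies $y> \frac{x}{k}-r$. $\lfloor x\rfloor$ is the floor function. Binomial coefficients $\binom{N}{j}$ with $N\ge0$ equal $0$ when $j<0$ or $j>N$. *)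

From HB Require Import structures.
From mathcomp Require Import all_boot all_order all_algebra.
Set Implicit Arguments. Unset Strict Implicit. Unset Printing Implicit Defensive.
Import Order.TTheory GRing.Theory Num.Theory.
Local Open Scope ring_scope.

(* A lattice path with unit steps is encoded by its sequence of steps:
   true = east step (1,0), false = north step (0,1). *)

Fixpoint path_end (x y : int) (s : seq bool) : int * int :=
  match s with
  | [::] => (x, y)
  | st :: s' => if st then path_end (x + 1) y s' else path_end x (y + 1) s'
  end.

(* every lattice point (x,y) visited (including the start) satisfies
   y > x/k - r, i.e. (for k >= 1) x < k * (y + r) *)
Fixpoint stays_above (k r : int) (x y : int) (s : seq bool) : bool :=
  (x < k * (y + r)) &&
  match s with
  | [::] => true
  | st :: s' => if st then stays_above k r (x + 1) y s'
                else stays_above k r x (y + 1) s'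
  end.

(* L_{1/k,r}(a,b;m,n): paths from (a,b) to (m,n); such a path has exactly
   (m-a)+(n-b) unit steps. *)
Definition lattice_paths (k r a b m n : int) :
  {set ((`|m - a| + `|n - b|)%N).-tuple bool} :=
  [set p : ((`|m - a| + `|n - b|)%N).-tuple bool | (path_end a b (tval p) == (m, n)) && stays_above k r a b (tval p)].

(* Binomial coefficient with integer arguments, N >= 0 intended:
   0 when j < 0 or j > N (the latter is automatic for 'C). *)
Definition zbinom (N j : int) : int :=
  if (0 <= N) && (0 <= j) then ('C(`|N|, `|j|))%:Z else 0.

From HB Require Import structures.
From mathcomp Require Import all_boot all_order all_algebra.
From mathcomp Require Import zify ring lra.
Import Order.TTheory GRing.Theory Num.Theory.
Local Open Scope ring_scope.

(* A path from (x, y) begins with an east or a north step, so the number of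
   paths satisfies a Pascal recursion in its starting point.  On the right
   the starting point enters only through the Raney numbers
   R(t, c) = c / ((k+1) t + c) * C((k+1) t + c, t), with t = n - y - i and
   c = k (y + r) - x, and R(t, c) = R(t, c - 1) + R(t - 1, c + k), so the sum
   obeys the same recursion term by term.  The boundary values agree: the sum
   vanishes on the line x = k (y + r) and above row n, and in column m + 1 it
   becomes sum_i (-1)^i R(j - i, c) C(k (j - i) + c, i), which is 0 for j > 0
   (double induction on j and c). *)

Lemma zbinom_nat (N j : nat) : zbinom N j = 'C(N, j).
Proof. by rewrite /zbinom !le0z_nat. Qed.

Lemma zbinomr_lt0 (N j : int) : j < 0 -> zbinom N j = 0.
Proof. by rewrite /zbinom => hj; rewrite (lt_geF hj) andbF. Qed.

Lemma zbinoml_lt0 (N j : int) : N < 0 -> zbinom N j = 0.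
Proof. by rewrite /zbinom => hN; rewrite (lt_geF hN). Qed.

Lemma zbinom_small (N j : int) : N < j -> zbinom N j = 0.
Proof.
move=> h; have [hN|] := ltrP N 0; first exact: zbinoml_lt0.
case: N h => // N h _; case: j h => [j|j] h; last by rewrite zbinomr_lt0.
by rewrite zbinom_nat bin_small //; lia.
Qed.

Lemma zbinom0 (N : int) : 0 <= N -> zbinom N 0 = 1.
Proof. by case: N => // N _; rewrite zbinom_nat bin0. Qed.

Lemma zbinomS (d i : int) : (d = -1 -> i <> 0) ->
  zbinom (d + 1) i = zbinom d i + zbinom d (i - 1).
Proof.
move=> hd; have [hi|hi] := ltrP i 0; first by rewrite !zbinomr_lt0 //; lia.
have [hd1|hd1] := ltrP d (-1); first by rewrite !zbinoml_lt0 //; lia.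
have [hd0|hd0] := ltrP d 0.
  have e : d = -1 by lia.
  have {}hi : 0 < i by have := hd e; lia.
  by rewrite e addNr zbinom_small // !zbinoml_lt0.
case: d hd hd1 hd0 => // D _ _ _; case: i hi => // [[|I]] _.
  by rewrite -PoszD !zbinom0 // zbinomr_lt0.
have -> : Posz I.+1 - 1 = Posz I by lia.
by rewrite -PoszD addn1 !zbinom_nat binS PoszD addrC.
Qed.

(* The Raney number R_{k+1,c}(t) = c / ((k+1) t + c) * C((k+1) t + c, t) in a
   form that is an integer for all t and c (see [raney_closed]); the case
   [t = 0] is set to 1 for every c so that [raney_rec] holds without exception. *)
Definition raney (k t c : int) : int :=
  if t == 0 then 1 else
  zbinom ((k + 1) * t + c - 1) t - k * zbinom ((k + 1) * t + c - 1) (t - 1).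

Lemma raney_lt0 k t c : t < 0 -> raney k t c = 0.
Proof.
move=> ht; rewrite /raney; have -> : (t == 0) = false by lia.
by rewrite !zbinomr_lt0 ?mulr0 ?subr0 //; lia.
Qed.

Lemma raneyE k t c : 0 <= t -> (t = 0 -> 1 <= c) ->
  raney k t c = zbinom ((k + 1) * t + c - 1) t - k * zbinom ((k + 1) * t + c - 1) (t - 1).
Proof.
move=> ht hc; rewrite /raney; case: eqP => [e|//]; subst t.
rewrite mulr0 add0r zbinom0; last by have := hc erefl; lia.
by rewrite zbinomr_lt0 // mulr0 subr0.
Qed.

Lemma raney_rec k t c : 0 <= k -> 1 <= c ->
  raney k t c = raney k t (c - 1) + raney k (t - 1) (c + k).
Proof.
move=> hk hc; have [ht|ht] := ltrP t 0.
  by rewrite !raney_lt0 ?addr0 //; lia.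
have [->|t0] := eqVneq t 0; first by rewrite (@raney_lt0 k (0 - 1)).
rewrite (raneyE k t c) ?(raneyE k t (c - 1)) ?(raneyE k (t - 1) (c + k)); try lia.
have -> : (k + 1) * (t - 1) + (c + k) - 1 = ((k + 1) * t + c - 1) - 1 by ring.
have -> : (k + 1) * t + (c - 1) - 1 = ((k + 1) * t + c - 1) - 1 by ring.
set N := (k + 1) * t + c - 1.
have -> : N = (N - 1) + 1 by ring.
rewrite !zbinomS; try (rewrite /N; nia).
have -> : N - 1 + 1 - 1 = N - 1 by ring.
have -> : t - 1 - 1 = t - 2 by ring.
ring.
Qed.

Lemma raney_c0 k t : 0 <= k -> 0 < t -> raney k t 0 = 0.
Proof.
case: k => // K _; case: t => // [[|T]] // _.
rewrite raneyE //.
have -> : (Posz K + 1) * Posz T.+1 + 0 - 1 = Posz (K * T + K + T)%N by lia.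
have -> : Posz T.+1 - 1 = Posz T by lia.
rewrite !zbinom_nat.
have -> : 'C(K * T + K + T, T.+1) = (K * 'C(K * T + K + T, T))%N.
  apply/eqP; rewrite -(eqn_pmul2l (ltn0Sn T)) mul_bin_left.
  have -> : (K * T + K + T - T = T.+1 * K)%N by lia.
  by rewrite mulnA.
by rewrite PoszM subrr.
Qed.

Lemma raney_closed k t c : 0 <= k -> 1 <= c ->
  (c%:~R / ((k + 1) * t + c)%:~R : rat) * (zbinom ((k + 1) * t + c) t)%:~R
  = (raney k t c)%:~R.
Proof.
move=> hk hc; have [ht|ht] := ltrP t 0.
  by rewrite zbinomr_lt0 // raney_lt0 // mulr0.
have [->|t0] := eqVneq t 0.
  rewrite /raney eqxx mulr0 add0r zbinom0; last by lia.
  by rewrite mulr1 divff // intr_eq0; lia.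
have hM : ((k + 1) * t + c)%:~R != (0 : rat) by rewrite intr_eq0; nia.
apply: (mulfI hM); rewrite mulrA mulrCA divff // mulr1 -!intrM; congr (_%:~R).
rewrite raneyE //; clear hM.
case: k hk => // K _; case: t ht t0 => // [[|T]] // _ _.
case: c hc => // [[|C]] // _.
set M := (K * T + K + T + C)%N.+2.
have -> : (Posz K + 1) * Posz T.+1 + Posz C.+1 = Posz M by rewrite /M; lia.
have -> : Posz M - 1 = Posz M.-1 by rewrite /M; lia.
have -> : Posz T.+1 - 1 = Posz T by lia.
rewrite !zbinom_nat.
have down := mul_bin_down M T.+1; have diag := mul_bin_diag M T.
have eM : (M - T.+1 = K * T.+1 + C.+1)%N by rewrite /M; lia.
rewrite eM in down.
rewrite mulrBr mulrCA -!PoszM down diag !PoszM PoszD !PoszM; ring.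
Qed.

Definition raney_alt (k : int) (j : nat) (c : int) : int :=
  \sum_(i < j.+1) (-1) ^+ i * raney k (j%:Z - i%:Z) c * zbinom (k * (j%:Z - i%:Z) + c) i%:Z.

Lemma raney_alt0 k c : 0 <= c -> raney_alt k 0 c = 1.
Proof. by move=> hc; rewrite /raney_alt big_ord1 /= subrr mulr0 add0r zbinom0. Qed.

Lemma raney_alt_rec k j c : 0 <= k -> 1 <= c ->
  raney_alt k j.+1 c = raney_alt k j.+1 (c - 1) - raney_alt k j (c - 1) + raney_alt k j (c + k).
Proof.
move=> hk hc.
pose u (i : nat) := (-1) ^+ i * raney k (j.+1%:Z - i%:Z) (c - 1).
have split3 : raney_alt k j.+1 c =
    \sum_(i < j.+2) u i * zbinom (k * (j.+1%:Z - i%:Z) + (c - 1)) i%:Z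
  + \sum_(i < j.+2) u i * zbinom (k * (j.+1%:Z - i%:Z) + (c - 1)) (i%:Z - 1)
  + \sum_(i < j.+2) (-1) ^+ i * raney k (j%:Z - i%:Z) (c + k) * zbinom (k * (j.+1%:Z - i%:Z) + c) i%:Z.
  rewrite /raney_alt -!big_split /=; apply: eq_bigr => i _.
  have hi := ltn_ord i.
  rewrite (raney_rec k (j.+1%:Z - i%:Z)) //.
  have -> : j.+1%:Z - i%:Z - 1 = j%:Z - i%:Z by lia.
  have -> : k * (j.+1%:Z - i%:Z) + c = (k * (j.+1%:Z - i%:Z) + (c - 1)) + 1 by ring.
  rewrite zbinomS /u; [ring | nia].
rewrite split3; congr (_ + _ + _).
- rewrite big_ord_recl /= (@zbinomr_lt0 _ (0%:Z - 1)) // mulr0 add0r.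
  rewrite /raney_alt -sumrN; apply: eq_bigr => i _.
  rewrite /u /bump /= add1n.
  have -> : i.+1%:Z - 1 = i%:Z by lia.
  have -> : j.+1%:Z - i.+1%:Z = j%:Z - i%:Z by lia.
  by rewrite exprS mulN1r !mulNr.
- rewrite big_ord_recr /= raney_lt0; last by lia.
  rewrite mulr0 mul0r addr0 /raney_alt; apply: eq_bigr => i _.
  by have -> : k * (j.+1%:Z - i%:Z) + c = k * (j%:Z - i%:Z) + (c + k) by ring.
Qed.

Lemma raney_alt_c0 k j : 0 <= k -> raney_alt k j.+1 0 = 0.
Proof.
move=> hk; apply: big1 => i _; have hi := ltn_ord i.
have [hij|hij] := ltnP i j.+1.
  by rewrite raney_c0 ?mulr0 ?mul0r //; lia.
have -> : nat_of_ord i = j.+1 by lia.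
by rewrite zbinom_small ?mulr0 //; lia.
Qed.

Lemma raney_alt_eq0 k j c : 0 <= k -> 0 <= c -> raney_alt k j.+1 c = 0.
Proof.
move=> hk; elim: j c => [|j IHj] c; case: c => // C _;
  elim: C => [|C IHC]; rewrite ?raney_alt_c0 //;
  have -> : Posz C.+1 = Posz C + 1 by lia.
- by rewrite raney_alt_rec ?addrK ?IHC ?raney_alt0 ?subrr //; lia.
- by rewrite raney_alt_rec ?addrK ?IHC ?IHj ?subrr //; lia.
Qed.

Lemma big_tuple_cons (R : Type) (idx : R) (op : Monoid.com_law idx)
    (T : finType) (L : nat) (F : L.+1.-tuple T -> R) :
  \big[op/idx]_(p : L.+1.-tuple T) F p =
  \big[op/idx]_(x : T) \big[op/idx]_(t : L.-tuple T) F [tuple of x :: t].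
Proof.
rewrite pair_big /=.
rewrite (reindex (fun xt : T * L.-tuple T => [tuple of xt.1 :: xt.2])) //=.
exists (fun p : L.+1.-tuple T => (thead p, behead_tuple p)) => [[x t] _|p _].
  by congr (_, _); apply: val_inj.
by rewrite [RHS]tuple_eta.
Qed.

Lemma path_end_ge (x y : int) (s : seq bool) :
  x <= (path_end x y s).1 /\ y <= (path_end x y s).2.
Proof.
elim: s x y => [|[] s IH] x y /=; first by [].
- by have [] := IH (x + 1) y; lia.
- by have [] := IH x (y + 1); lia.
Qed.

Definition npaths (k r : int) (L : nat) (x y m n : int) : nat :=
  \sum_(p : L.-tuple bool)
    ((path_end x y p == (m, n)) && stays_above k r x y p).

Lemma npaths0 k r x y m n :
  npaths k r 0 x y m n = ((x, y) == (m, n)) && (x < k * (y + r)).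
Proof.
rewrite /npaths (big_pred1 [tuple]) /=; first by rewrite andbT.
by move=> t; apply/esym/eqP/val_inj; rewrite tuple0.
Qed.

Lemma npathsS k r L x y m n :
  npaths k r L.+1 x y m n =
  if x < k * (y + r) then (npaths k r L (x + 1) y m n + npaths k r L x (y + 1) m n)%N
  else 0%N.
Proof.
rewrite /npaths big_tuple_cons big_bool /=.
by case: (x < _) => //=; rewrite !big1 // => t _; rewrite andbF.
Qed.

Lemma npaths_below k r L x y m n :
  ~~ (x < k * (y + r)) -> npaths k r L x y m n = 0%N.
Proof.
move=> h; rewrite /npaths big1 // => p _.
by case: (tval p) => [|? ?] /=; rewrite (negbTE h) andbF.
Qed.

Lemma npaths_east_of k r L x y m n : m < x -> npaths k r L x y m n = 0%N.
Proof.
move=> h; rewrite /npaths big1 // => p _.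
have [hx _] := path_end_ge x y p.
by case: (path_end x y p) hx => u v /= hu; rewrite xpair_eqE; case: eqP => //; lia.
Qed.

Lemma npaths_north_of k r L x y m n : n < y -> npaths k r L x y m n = 0%N.
Proof.
move=> h; rewrite /npaths big1 // => p _.
have [_ hy] := path_end_ge x y p.
by case: (path_end x y p) hy => u v /= hv; rewrite xpair_eqE andbC; case: eqP => //; lia.
Qed.

Lemma card_lattice_paths k r a b m n :
  #|lattice_paths k r a b m n| = npaths k r (`|m - a| + `|n - b|) a b m n.
Proof.
rewrite /lattice_paths /npaths -sum1_card big_mkcond /=; apply: eq_bigr => p _.
by rewrite inE; case: (_ && _).
Qed.

Lemma big_ord_vanishing_eq (V : nmodType) (F : nat -> V) (n1 n2 : nat) :
  (forall i : nat, (minn n1 n2 <= i)%N -> F i = 0) ->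
  \sum_(i < n1) F i = \sum_(i < n2) F i.
Proof.
move=> F0; suff trunc n : (minn n1 n2 <= n)%N ->
    \sum_(i < n) F i = \sum_(i < minn n1 n2) F i.
  by rewrite !trunc ?geq_minl ?geq_minr.
move=> hn; rewrite -!(big_mkord xpredT) (big_cat_nat (leq0n _) hn) /=.
rewrite [X in _ + X = _]big_nat_cond [X in _ + X = _]big1 ?addr0 // => i.
by case/andP=> /andP[/F0].
Qed.

Section BallotSum.

Variables (k r m n : int) (T : nat).
Hypotheses (k_ge1 : 1 <= k) (m_lt : m < k * (n + r))
           (T_large : k * (n + r) - m - 1 < (k + 1) * T%:Z).

Definition ballot_term (x y : int) (i : nat) : int :=
  (-1) ^+ i * raney k (n - y - i%:Z) (k * (y + r) - x) * zbinom (k * (n + r - i%:Z) - m - 1) i%:Z.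

Definition ballot_sum (x y : int) : int := \sum_(i < T) ballot_term x y i.

Lemma ballot_sum_rec x y : x < k * (y + r) ->
  ballot_sum x y = ballot_sum (x + 1) y + ballot_sum x (y + 1).
Proof.
move=> hx; rewrite /ballot_sum -big_split /=; apply: eq_bigr => i _; rewrite /ballot_term.
rewrite (raney_rec k _ (k * (y + r) - x)) ?mulrDr ?mulrDl; try lia.
by congr (_ * raney _ _ _ * _ + _ * raney _ _ _ * _); ring.
Qed.

Lemma ballot_sum_north_of x y : n < y -> ballot_sum x y = 0.
Proof. by move=> hy; apply: big1 => i _; rewrite /ballot_term raney_lt0 ?mulr0 ?mul0r //; lia. Qed.

Lemma ballot_sum_end : ballot_sum m n = 1.
Proof.
have T_gt0 : (0 < T)%N by case: T T_large => //; rewrite mulr0; lia.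
rewrite /ballot_sum -(prednK T_gt0) big_ord_recl big1 /ballot_term /=.
  by rewrite subrr subr0 /raney eqxx zbinom0 ?mulr1 ?addr0 //; lia.
by move=> i _; rewrite raney_lt0 ?mulr0 ?mul0r // /bump; lia.
Qed.

Lemma ballot_sum_diag x y : x <= m -> x = k * (y + r) -> ballot_sum x y = 0.
Proof.
move=> hxm hx; apply: big1 => i _; rewrite /ballot_term -hx subrr.
have [hi|hi] := ltrP (n - y - i%:Z) 0; first by rewrite raney_lt0 ?mulr0 ?mul0r.
have [e|ne] := eqVneq (n - y - i%:Z) 0; last by rewrite raney_c0 ?mulr0 ?mul0r //; lia.
rewrite zbinoml_lt0 ?mulr0 //; nia.
Qed.

Lemma ballot_sum_east_of y : y < n -> m < k * (y + r) -> ballot_sum (m + 1) y = 0.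
Proof.
move=> hy hm; set c := k * (y + r) - m - 1.
have [j hj] : exists j : nat, (n - y)%R = Posz j.+1 by exists (absz (n - y - 1)%R); lia.
have k_ge0 : 0 <= k by lia.
have c_ge0 : 0 <= c by lia.
rewrite -(@raney_alt_eq0 k j c k_ge0 c_ge0) /c.
rewrite /ballot_sum (big_ord_vanishing_eq _ (ballot_term _ _) T j.+2) => [|i hi].
  apply: eq_bigr => i _; rewrite /ballot_term hj; congr (_ * raney _ _ _ * zbinom _ _); lia.
rewrite /ballot_term; have [hiT|hij] := leqP T i; last by rewrite raney_lt0 ?mulr0 ?mul0r //; lia.
by rewrite zbinom_small ?mulr0 //; nia.
Qed.

Lemma npaths_ballot_sum L x y : x <= m -> y <= n -> x < k * (y + r) ->
  (m - x) + (n - y) = L%:Z -> (npaths k r L x y m n)%:Z = ballot_sum x y.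
Proof.
elim: L x y => [|L IH] x y hxm hyn hx hL.
  have [-> ->] : x = m /\ y = n by lia.
  by rewrite npaths0 eqxx m_lt ballot_sum_end.
rewrite npathsS hx PoszD ballot_sum_rec //; congr (_ + _).
- have [exm|xm] := eqVneq x m.
    by rewrite exm npaths_east_of ?ballot_sum_east_of //; lia.
  have [hx1|hx1] := ltrP (x + 1) (k * (y + r)); first by apply: IH; lia.
  by rewrite npaths_below ?ballot_sum_diag -?leNgt //; lia.
- have [eyn|yn] := eqVneq y n.
    by rewrite eyn npaths_north_of ?ballot_sum_north_of //; lia.
  by apply: IH; nia.
Qed.

End BallotSum.

Theorem corollary2p3 (k r a b m n : int) :
  1 <= k ->
  0 <= a -> a <= m ->
  0 < b -> a < k * (b + r) -> b <= n ->
  m < k * (n + r) ->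
  (#|lattice_paths k r a b m n|%:R : rat) =
  \sum_(i < (`|((k * (n + r) - m - 1) %/ (k + 1))%Z|).+1)
    (-1) ^+ i *
    ((k * (b + r) - a)%:~R / ((k + 1) * (n - i%:Z) - a - b + k * r)%:~R) *
    (zbinom ((k + 1) * (n - i%:Z) - a - b + k * r) (n - b - i%:Z))%:~R *
    (zbinom (k * (n + r - i%:Z) - m - 1) i%:Z)%:~R.
Proof.
move=> hk ha hm hb hc hbn hmn.
set T := (`|_|).+1.
have T_large : k * (n + r) - m - 1 < (k + 1) * T%:Z.
  have q_ge0 : 0 <= ((k * (n + r) - m - 1) %/ (k + 1))%Z by rewrite divz_ge0; lia.
  rewrite [(k + 1) * _]mulrC -ltz_divLR /T; lia.
rewrite card_lattice_paths -[_%:R]/((_%:Z)%:~R).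
rewrite (@npaths_ballot_sum k r m n T) //; last by lia.
rewrite rmorph_sum; apply: eq_bigr => i _; rewrite /ballot_term.
have -> : (k + 1) * (n - i%:Z) - a - b + k * r = (k + 1) * (n - i%:Z - b) + (k * (b + r) - a) by ring.
have -> : n - b - i%:Z = n - i%:Z - b by ring.
have k_ge0 : 0 <= k by lia.
have c_ge1 : 1 <= k * (b + r) - a by lia.
rewrite -[in RHS](mulrA ((-1) ^+ i)) raney_closed //.
by rewrite !rmorphM /= rmorphXn /= rmorphN1.
Qed.
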